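(* Let $k$ be a positive integer such that $k+1$ is an odd prime. For every $\mathbf v\in N_k$ there exist $s,r\in\mathbb{Z}_{k+1}^\times$ such that every coordinate of $s\mathbf v+r(1,2,\ldots,k)\in\mathbb{Z}_{k+1}^k$ lies in $\{1,2,\ldots,k-1\}$ (as residues modulo $k+1$).
   Context: $\mathbb{Z}_{k+1}$ is the integers modulo $k+1$ and $\mathbb{Z}_{k+1}^\times$ its group of units. $N_k:=\{\mathbf v\in\mathbb{Z}_{k+1}^k:\ \mathbf v\neq\mathbf 0 \text{ and } \mathbf v \text{ has at least one zero coordinate}\}$. *)

From mathcomp Require Import all_boot all_order all_algebra.
Set Implicit Arguments. Unset Strict Implicit. Unset Printing Implicit Defensive.
Import GRing.Theory.
Local Open Scope ring_scope.

(* N_k : nonzero vectors of Z_(k+1)^k with at least one zero coordinate.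
   Vectors are row vectors 'rV['Z_(k.+1)]_k indexed by i : 'I_k,
   where coordinate i corresponds to the paper's coordinate i+1. *)
Definition in_Nk (k : nat) (v : 'rV['Z_(k.+1)]_k) : Prop :=
  v != 0 /\ exists i : 'I_k, v 0 i = 0.

Definition idvec (k : nat) : 'rV['Z_(k.+1)]_k := \row_(i < k) (i.+1)%:R.

From mathcomp Require Import all_boot all_order all_algebra.
From mathcomp Require Import fingroup cyclic zify.
Set Implicit Arguments. Unset Strict Implicit. Unset Printing Implicit Defensive.
Import GRing.Theory.
Local Open Scope ring_scope.

(* Write p = k + 1 and x_t(i) = i + t v_i in F_p.  If some t != 0 makes every x_t(i)
   nonzero while missing a nonzero value u, then s = -t/u and r = -1/u work: the
   coordinates -x_t(i)/u avoid both 0 and -1 = k.  Otherwise, for every t the product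
   P(t) = prod_i x_t(i) is either 0 or, its factors running over all of F_p^*, equal to
   c = prod F_p^*.  Since v has a zero coordinate, P is a polynomial of degree < p - 1,
   so sum_t P(t) = 0; hence c * #{t | P(t) != 0} = 0, which is impossible because that
   count lies strictly between 0 (t = 0) and p (t = -1/v_i at a nonzero v_i). *)

Section FinFieldPowerSums.
Variable F : finFieldType.

Lemma natr_card_finField : #|F|%:R = 0 :> F.
Proof. by rewrite -(FinRing.zmodXgE _ 1) -cardsT expg_cardG ?inE. Qed.

Lemma exists_expf_neq1 l : (0 < l < #|F|.-1)%N -> exists2 a : F, a != 0 & a ^+ l != 1.
Proof.
case/andP=> l_gt0 l_lt; apply/exists_inP; apply: contraLR l_lt; rewrite -leqNgt.
move=> /exists_inPn all_roots.
have XnB1_neq0 : 'X^l - 1 != 0 :> {poly F} by rewrite -size_poly_gt0 -polyC1 size_XnsubC.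
have := max_poly_roots XnB1_neq0 _ (enum_uniq (predC1 0)).
rewrite -cardE cardC1 -polyC1 size_XnsubC //; apply.
apply/allP=> y; rewrite mem_enum => y_neq0.
by rewrite /root !hornerE subr_eq0; have := all_roots y y_neq0; rewrite negbK.
Qed.

Lemma sum_expr_finField l : (l < #|F|.-1)%N -> \sum_(t : F) t ^+ l = 0.
Proof.
case: l => [_|l l_lt].
  by under eq_bigr do rewrite expr0; rewrite sumr_const natr_card_finField.
have [a a_neq0 al_neq1] := @exists_expf_neq1 l.+1 l_lt.
set S := \sum_(t : F) _.
have S_invariant : S = a ^+ l.+1 * S.
  rewrite {1}/S (reindex_inj (mulfI a_neq0)) mulr_sumr.
  by apply: eq_bigr => t _; rewrite exprMn.
apply/eqP; move/eqP: S_invariant.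
by rewrite -subr_eq0 -{1}(mul1r S) -mulrBl mulf_eq0 subr_eq0 eq_sym (negPf al_neq1).
Qed.

Lemma sum_horner_finField (q : {poly F}) : (size q < #|F|)%N -> \sum_(t : F) q.[t] = 0.
Proof.
move=> size_q; under eq_bigr do rewrite horner_coef.
rewrite exchange_big big1 // => i _.
rewrite -mulr_sumr sum_expr_finField ?mulr0 //.
by have := ltn_ord i; have := card_finNzRing_gt1 F; lia.
Qed.

End FinFieldPowerSums.

Lemma size_prod_leq2 (R : nzRingType) (I : finType) (P : pred I) (f : I -> {poly R}) :
  (forall i, P i -> size (f i) <= 2)%N -> (size (\prod_(i | P i) f i)%R <= #|P|.+1)%N.
Proof.
move=> size_f; apply: leq_trans (size_poly_prod_leq _ _) _.
have : (\sum_(i | P i) size (f i) <= \sum_(i | P i) 2)%N by apply: leq_sum.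
by rewrite sum_nat_const; lia.
Qed.

Section PrimeField.
Variable k : nat.
Hypothesis k1_prime : prime k.+1.
Local Notation F := 'F_(k.+1).

Lemma card_Fp_nonzero : #|[set y : F | y != 0]| = k.
Proof. by rewrite cardsE cardC1 card_Fp. Qed.

Lemma val_Fp_lt (y : F) : (val y < k.+1)%N.
Proof. by apply: leq_trans (ltn_ord y) _; rewrite Fp_cast. Qed.

Lemma natr_Fp_neq0 n : (0 < n < k.+1)%N -> n%:R != 0 :> F.
Proof.
case/andP=> n_gt0 n_lt; rewrite -(dvdn_pcharf (pchar_Fp k1_prime)).
by apply: contraTN n_lt => /dvdn_leq; rewrite -leqNgt; apply.
Qed.

Lemma natr_succ_ord_neq0 (i : 'I_k) : (i.+1)%:R != 0 :> F.
Proof. by rewrite natr_Fp_neq0 //= ltnS ltn_ord. Qed.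

Lemma natr_succ_ord_onto (u : F) : u != 0 -> exists i : 'I_k, (i.+1)%:R = u.
Proof.
move=> u_neq0; have val_u_gt0 : (0 < val u)%N.
  by rewrite lt0n; apply: contra u_neq0 => /eqP val_u0; apply/eqP/val_inj.
have val_u_le : ((val u).-1 < k)%N by have := val_Fp_lt u; lia.
by exists (Ordinal val_u_le); rewrite /= prednK // natr_Zp.
Qed.

Lemma prod_onto_nonzero (f : 'I_k -> F) :
    (forall i, f i != 0) -> (forall u, u != 0 -> exists i, f i = u) ->
  \prod_i f i = \prod_(y : F | y != 0) y.
Proof.
move=> f_neq0 f_onto.
have im_f : f @: setT = [set y : F | y != 0].
  apply/setP => y; rewrite inE; apply/imsetP/idP => [[i _ ->]|y_neq0]; first exact: f_neq0.
  by have [i <-] := f_onto y y_neq0; exists i.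
have f_inj : {in setT &, injective f}.
  by apply/imset_injP; rewrite im_f cardsT card_ord card_Fp_nonzero.
transitivity (\prod_(i in [set: 'I_k]) f i); first by apply: eq_bigl => i; rewrite inE.
by rewrite -(big_imset id f_inj) im_f big_set.
Qed.

Lemma sum_prod_affine_eq0 (a v : 'I_k -> F) (j0 : 'I_k) : v j0 = 0 ->
  \sum_(t : F) \prod_i (a i + t * v i) = 0.
Proof.
move=> vj0; pose Q := \prod_i ((a i)%:P + v i *: 'X).
have QE t : Q.[t] = \prod_i (a i + t * v i).
  by rewrite horner_prod; apply: eq_bigr => i _; rewrite !hornerE mulrC.
have size_Q : (size Q < #|F|)%N.
  rewrite card_Fp // /Q (bigD1 j0) //= vj0 scale0r addr0 mul_polyC.
  apply: leq_ltn_trans (size_scale_leq _ _) _.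
  apply: leq_ltn_trans (size_prod_leq2 _) _ => [i _|]; last first.
    by rewrite cardC1 card_ord; have := ltn_ord j0; lia.
  apply: leq_trans (size_polyD _ _) _; rewrite geq_max (leq_trans (size_polyC_leq1 _)) //=.
  by rewrite (leq_trans (size_scale_leq _ _)) ?size_polyX.
by rewrite -[RHS](sum_horner_finField size_Q); apply: eq_bigr => t _; rewrite QE.
Qed.

Lemma sum_const_on_support_neq0 (g : F -> F) (c t0 t1 : F) :
    c != 0 -> (forall t, g t != 0 -> g t = c) -> g t0 = 0 -> g t1 != 0 ->
  \sum_t g t != 0.
Proof.
move=> c_neq0 g_const g_t0 g_t1; pose N := #|[pred t | g t != 0]|.
have sum_g : \sum_t g t = c *+ N.
  rewrite (bigID (fun t => g t != 0)) /= [X in _ + X]big1 ?addr0; last first.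
    by move=> t /negPn/eqP.
  by rewrite -sumr_const; apply: eq_big => // t /g_const.
have N_gt0 : (0 < N)%N by apply/card_gt0P; exists t1.
have N_lt : (N < k.+1)%N.
  rewrite -[k.+1](card_Fp k1_prime) -(cardC [pred t | g t != 0]) -addn1 leq_add2l.
  by apply/card_gt0P; exists t0; rewrite !inE g_t0 eqxx.
by rewrite sum_g -mulr_natr mulf_neq0 ?natr_Fp_neq0 ?N_gt0.
Qed.

Lemma exists_affine_shift_missing (v : 'I_k -> F) (i0 j0 : 'I_k) :
    v i0 != 0 -> v j0 = 0 ->
  exists t : F, [/\ t != 0, forall i : 'I_k, (i.+1)%:R + t * v i != 0 &
    exists2 u : F, u != 0 & forall i : 'I_k, (i.+1)%:R + t * v i != u].
Proof.
move=> vi0_neq0 vj0; pose x t (i : 'I_k) : F := (i.+1)%:R + t * v i.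
have [/existsP [t /and3P [t_neq0 /forallP x_neq0 /existsP [u /andP [u_neq0 /forallP x_miss]]]]
     | no_shift] := boolP [exists t, [&& t != 0, [forall i, x t i != 0] &
                                       [exists u, (u != 0) && [forall i, x t i != u]]]].
  by exists t; split=> //; exists u.
have x_onto t : \prod_i x t i != 0 -> forall u, u != 0 -> exists i, x t i = u.
  move=> /prodf_neq0 x_neq0 u u_neq0; have [->|t_neq0] := eqVneq t 0.
    by have [i <-] := natr_succ_ord_onto u_neq0; exists i; rewrite /x mul0r addr0.
  move: no_shift; rewrite negb_exists => /forallP/(_ t); rewrite t_neq0.
  have -> /= : [forall i, x t i != 0] by apply/forallP => i; apply: x_neq0.
  rewrite negb_exists => /forallP/(_ u); rewrite u_neq0 negb_forall.
  by case/existsP=> i /negPn/eqP; exists i.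
have prod_x_const t : \prod_i x t i != 0 -> \prod_i x t i = \prod_(y : F | y != 0) y.
  move=> x_neq0; apply: prod_onto_nonzero (x_onto t x_neq0) => i.
  by move/prodf_neq0: x_neq0; apply.
have prod_x_t0 : \prod_i x (- (i0.+1)%:R / v i0) i = 0.
  by apply/eqP/prodf_eq0; exists i0 => //; rewrite /x divfK // subrr.
have prod_x_0 : \prod_i x 0 i != 0.
  by apply/prodf_neq0 => i _; rewrite /x mul0r addr0 natr_succ_ord_neq0.
have c_neq0 : \prod_(y : F | y != 0) y != 0 by apply/prodf_neq0.
have := sum_const_on_support_neq0 c_neq0 prod_x_const prod_x_t0 prod_x_0.
by rewrite (sum_prod_affine_eq0 (fun i => (i.+1)%:R) vj0) eqxx.
Qed.

Lemma val_Fp_bounds (y : F) : y != 0 -> y != -1 -> (1 <= val y <= k.-1)%N.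
Proof.
move=> y_neq0 y_neqN1; have := val_Fp_lt y.
have val_y_neq0 : val y != 0%N by apply: contra y_neq0 => /eqP val_y0; apply/eqP/val_inj.
have val_y_neqk : val y != k.
  apply: contra y_neqN1 => /eqP val_yk; rewrite -(natr_Zp y) val_yk.
  by rewrite -subr_eq0 opprK natr1 pchar_Fp_0.
by move: val_y_neq0 val_y_neqk; lia.
Qed.

Lemma exists_unit_affine_middle (v : 'rV[F]_k) : v != 0 -> (exists i, v 0 i = 0) ->
  exists s r : F, [/\ s \is a GRing.unit, r \is a GRing.unit &
    forall i : 'I_k, (1 <= val ((s *: v + r *: \row_(j < k) (j.+1)%:R) 0 i)%R <= k.-1)%N].
Proof.
move=> v_neq0 [j0 vj0].
have [i0 vi0_neq0] : exists i0, v 0 i0 != 0.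
  apply/existsP; apply: contraNT v_neq0; rewrite negb_exists => /forallP v0.
  by apply/eqP/rowP => i; rewrite mxE; apply/eqP/negPn.
have [t [t_neq0 x_neq0 [u u_neq0 x_miss]]] := exists_affine_shift_missing vi0_neq0 vj0.
have r_neq0 : - u^-1 != 0 by rewrite oppr_eq0 invr_eq0.
exists (- u^-1 * t), (- u^-1); split; rewrite ?unitfE ?mulf_neq0 // => i.
have -> : ((- u^-1 * t) *: v + - u^-1 *: \row_(j < k) (j.+1)%:R) 0 i =
          - u^-1 * ((i.+1)%:R + t * v 0 i) by rewrite !mxE mulrDr addrC mulrA.
apply: val_Fp_bounds; first by rewrite mulf_neq0.
by rewrite mulNr eqr_opp -[X in _ != X](mulVf u_neq0) (inj_eq (mulfI _)) ?invr_eq0.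
Qed.

End PrimeField.

Theorem proposition4p1 (k : nat) (Hk : (0 < k)%N) (Hp : prime k.+1)
  (Hodd : odd k.+1) (v : 'rV['Z_(k.+1)]_k) :
  in_Nk v ->
  exists s r : 'Z_(k.+1),
    [/\ s \is a GRing.unit, r \is a GRing.unit &
      forall i : 'I_k,
        let c : nat := nat_of_ord ((s *: v + r *: idvec k) 0 i) in
        (1 <= c <= k.-1)%N].
Proof.
have := @exists_unit_affine_middle k Hp; rewrite (pdiv_id Hp).
by move=> exists_middle [v_neq0 v_zero]; apply: exists_middle.
Qed.
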